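(* Let $F$ be a face of $\Delta$, let $\mathfrak r$ be the orthogonal complement of $\mathfrak n\cap\mathbb R^{I_F}$ in $\mathfrak n$, and let $z\in(\mathbb C^* )^{F^c}$. Then there exist a unique point $x\in\Psi_\Delta^{-1}(0)$, a unique point $\xi\in F$ and a unique $Y\in\mathfrak r$ such that $Az\cap\Psi_\Delta^{-1}(0)=\{x\}$, $\exp(iY)z=x$, and $\langle\xi,X_j\rangle-\lambda_j=|x_j|^2$ for $j=1,\dots,d$.
   Context: Let $\mathfrak d$ be an $n$-dimensional real vector space. Let $\Delta\subset\mathfrak d^*$ be an $n$-dimensional convex polytope with $d$ facets, $\Delta=\bigcap_{j=1}^d\{\mu\in\mathfrak d^*:\langle\mu,X_j\rangle\ge\lambda_j\}$, with chosen inward normals $X_1,\dots,X_d\in\mathfrak d$ and $\lambda_j\in\mathbb R$. For each face $F$, $I_F$ is such that $F=\{\mu\in\Delta:\langle\mu,X_j\rangle=\lambda_j\iff j\in I_F\}$. $(\mathbb C^* )^{F^c}=\{z\in\mathbb C^d:z_j=0\ (j\in I_F),\ z_j\ne0\ (j\notin I_F)\}$; $\mathbb R^{I_F}\subseteq\mathbb R^d$ is the coordinate subspace spanned by $e_j$, $j\in I_F$. $\pi:\mathbb R^d\to\mathfrak d$, $e_j\mapsto X_j$; $\mathfrak n=\ker\pi$ with the inner product induced from the standard one on $\mathbb R^d$; $\iota:\mathfrak n\to\mathbb R^d$ the inclusion. $A=\{\exp(iY):Y\in\mathfrak n\}$ acts on $\mathbb C^d$ by $z_j\mapsto e^{-2\pi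 Y_j}z_j$. $\Psi_\Delta:\mathbb C^d\to\mathfrak n^*$, $\Psi_\Delta(z)=\sum_{j=1}^d(|z_j|^2+\lambda_j)\iota^*(e_j^* )$. *)

From mathcomp Require Import ssreflect ssrfun ssrbool eqtype ssrnat fintype bigop.
From Stdlib Require Import Reals.
Open Scope R_scope.

(* Coordinates: d = R^n, its dual identified with R^n via the dot product. *)
Definition vec (k : nat) := 'I_k -> R.

Definition dot {k : nat} (u v : vec k) : R := \big[Rplus/0]_(i < k) (u i * v i).

Definition cplx := (R * R)%type.
Definition czero : cplx := (0, 0).
Definition cnormsq (c : cplx) : R := fst c * fst c + snd c * snd c.
Definition cscale (r : R) (c : cplx) : cplx := (r * fst c, r * snd c).

Section Toric.
Context {n d : nat} (X : 'I_d -> vec n) (lam : vec d).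

Definition inDelta (mu : vec n) : Prop := forall j, dot mu (X j) >= lam j.

Definition full_dim : Prop := exists mu, forall j, dot mu (X j) > lam j.
Definition delta_bounded : Prop :=
  exists B, forall mu, inDelta mu -> forall i, Rabs (mu i) <= B.
(* each inequality j defines its own facet of Delta (d facets, no redundant
   inequality, distinct j give distinct facets) *)
Definition facets_distinct : Prop :=
  forall j, exists mu, inDelta mu /\ dot mu (X j) = lam j /\
    forall k, k <> j -> dot mu (X k) > lam k.

(* the (open) face F with index set I_F = I *)
Definition in_face (I : pred 'I_d) (mu : vec n) : Prop :=
  inDelta mu /\ forall j, (dot mu (X j) = lam j <-> I j).
Definition is_face (I : pred 'I_d) : Prop := exists mu, in_face I mu.

Definition pi_map (Y : vec d) : vec n :=
  fun i => \big[Rplus/0]_(j < d) (Y j * X j i).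
Definition in_n (Y : vec d) : Prop := forall i, pi_map Y i = 0.
Definition in_n_I (I : pred 'I_d) (Y : vec d) : Prop :=
  in_n Y /\ forall j, ~~ I j -> Y j = 0.
Definition in_r (I : pred 'I_d) (Y : vec d) : Prop :=
  in_n Y /\ forall W, in_n_I I W -> dot Y W = 0.

Definition in_CstarFc (I : pred 'I_d) (z : 'I_d -> cplx) : Prop :=
  forall j, (I j -> z j = czero) /\ (~~ I j -> z j <> czero).

(* action of exp(iY), Y in n:  z_j |-> e^{-2 pi Y_j} z_j *)
Definition act (Y : vec d) (z : 'I_d -> cplx) : 'I_d -> cplx :=
  fun j => cscale (exp (- (2 * PI * Y j))) (z j).

(* Psi_Delta(z) in n^*, as the functional Y |-> sum_j (|z_j|^2 + lam_j) Y_j on n *)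
Definition Psi (z : 'I_d -> cplx) (Y : vec d) : R :=
  \big[Rplus/0]_(j < d) ((cnormsq (z j) + lam j) * Y j).
Definition Psi_zero (z : 'I_d -> cplx) : Prop := forall Y, in_n Y -> Psi z Y = 0.

Definition in_orbit (z w : 'I_d -> cplx) : Prop := exists Y, in_n Y /\ act Y z = w.

End Toric.

(** Write [x = exp(iY) z] with [Y] in [n], so [|x_j|^2 = a_j e^{-4 pi Y_j}] with
    [a_j = |z_j|^2], which vanishes exactly on [I = I_F].  Fix [mu] in the face
    [F] and its slacks [c_j = <mu, X_j> - lam_j], also vanishing exactly on [I].
    Since [sum_j <mu, X_j> W_j = 0] on [n], the condition [Psi(x) = 0] says that
    [Y] is a critical point on [n] of the convex energy
    [E(Y) = sum_j (a_j e^{-4 pi Y_j} / (4 pi) + c_j Y_j)].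
    - Existence: [E] is bounded below and coercive in the coordinates outside
      [I], and strongly convex there on half-lines; a minimizing sequence is
      therefore Cauchy outside [I], the projection of [n] to those coordinates
      is closed, and the limit is a minimizer, hence a critical point.
    - Uniqueness of [x]: [t |-> e^{-4 pi t}] is strictly decreasing.
    - [xi]: the vector [(|x_j|^2 + lam_j)_j] annihilates [n], hence has the form
      [(<xi, X_j>)_j]; [xi] is unique because the polytope is bounded.
    - [Y]: the orthogonal projection of [Y] along [n ∩ R^I] lands in [r], and
      two elements of [r] with the same coordinates outside [I] coincide. *)

From Pilot Require Import Defs.
From mathcomp Require Import all_boot all_algebra.
From mathcomp Require Import Rstruct.
From Stdlib Require Import Reals Lra Classical ClassicalEpsilon FunctionalExtensionality.
Import GRing.Theory Num.Theory.
Import Pilot.Defs.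
Open Scope R_scope.

Lemma sumR_sub (T : Type) (s : seq T) (F G : T -> R) :
  \big[Rplus/0]_(i <- s) (F i - G i) =
  \big[Rplus/0]_(i <- s) F i - \big[Rplus/0]_(i <- s) G i.
Proof.
rewrite /Rminus big_split /=; congr (_ + _).
by rewrite (big_morph Ropp Ropp_plus_distr Ropp_0).
Qed.

Lemma sumR_ge0 (T : Type) (s : seq T) (P : pred T) (F : T -> R) :
  (forall i, 0 <= F i) -> 0 <= \big[Rplus/0]_(i <- s | P i) F i.
Proof. by move=> F_ge0; elim/big_ind: _ => // *; [lra | apply: Rplus_le_le_0_compat]. Qed.

Lemma sumR_le (T : Type) (s : seq T) (F G : T -> R) :
  (forall i, F i <= G i) -> \big[Rplus/0]_(i <- s) F i <= \big[Rplus/0]_(i <- s) G i.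
Proof. by move=> FG; elim/big_ind2: _ => // *; [lra | apply: Rplus_le_compat]. Qed.

Lemma sumR_term {k : nat} {F : 'I_k -> R} (j : 'I_k) :
  (forall i, 0 <= F i) -> F j <= \big[Rplus/0]_(i < k) F i.
Proof.
move=> F_ge0; rewrite (bigD1 j) //=.
rewrite -{1}(Rplus_0_r (F j)); apply: Rplus_le_compat_l; exact: sumR_ge0.
Qed.

Lemma sumR_eq0 {k : nat} {F : 'I_k -> R} :
  (forall i, 0 <= F i) -> \big[Rplus/0]_(i < k) F i = 0 -> forall j, F j = 0.
Proof. by move=> F_ge0 F0 j; have := sumR_term j F_ge0; have := F_ge0 j; lra. Qed.

Lemma Un_cv_const (x : R) : Un_cv (fun _ => x) x.
Proof. by move=> e e_gt0; exists 0%nat => k _; rewrite /R_dist Rminus_diag Rabs_R0. Qed.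

Lemma sumR_cv (T : Type) (s : seq T) (u : nat -> T -> R) (l : T -> R) :
  (forall i, Un_cv (fun k => u k i) (l i)) ->
  Un_cv (fun k => \big[Rplus/0]_(i <- s) u k i) (\big[Rplus/0]_(i <- s) l i).
Proof.
move=> cv_u; elim: s => [|a s IH].
  rewrite big_nil; apply: (Un_cv_ext (fun _ => 0)); first by move=> k; rewrite big_nil.
  exact: Un_cv_const.
rewrite big_cons; apply: (Un_cv_ext (fun k => u k a + \big[Rplus/0]_(i <- s) u k i)).
  by move=> k; rewrite big_cons.
exact: CV_plus.
Qed.

Lemma sumR_derive (T : Type) (s : seq T) (f : T -> R -> R) (l : T -> R) (x : R) :
  (forall i, derivable_pt_lim (f i) x (l i)) ->
  derivable_pt_lim (fun t => \big[Rplus/0]_(i <- s) f i t) x (\big[Rplus/0]_(i <- s) l i).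
Proof.
move=> df; elim: s => [|a s IH].
  rewrite big_nil; apply: (derivable_pt_lim_ext (fct_cte 0)).
    by move=> t; rewrite big_nil.
  exact: derivable_pt_lim_const.
rewrite big_cons; apply: (derivable_pt_lim_ext (fun t => f a t + \big[Rplus/0]_(i <- s) f i t)).
  by move=> t; rewrite big_cons.
exact: derivable_pt_lim_plus.
Qed.

Section MatrixOrthogonality.
Local Open Scope ring_scope.
Variable F : realFieldType.

Lemma mulmx_tr_eq0 (p q : nat) (M : 'M[F]_(p, q)) : M *m M^T = 0 -> M = 0.
Proof.
move=> MMt0; apply/matrixP => i j; rewrite mxE; apply/eqP.
have /eqP := congr1 (fun N : 'M_p => N i i) MMt0; rewrite !mxE.
under eq_bigr => l _ do rewrite mxE -expr2.
rewrite psumr_eq0 => [/allP/(_ j (mem_index_enum _))|l _]; last exact: sqr_ge0.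
by rewrite sqrf_eq0.
Qed.

Lemma orth_ker_range (k m : nat) (A : 'M[F]_(k, m)) (c : 'rV[F]_k) :
  c *m (kermx A)^T = 0 -> exists xi : 'rV[F]_m, c = xi *m A^T.
Proof.
move=> c_orth.
have At_ker : (A^T <= kermx (kermx A)^T)%MS.
  by apply/sub_kermxP; rewrite -trmx_mul mulmx_ker trmx0.
have rank_eq : \rank (kermx (kermx A)^T) = \rank A^T.
  by rewrite mxrank_ker mxrank_tr mxrank_ker mxrank_tr subKn // rank_leq_row.
have /andP[_ kerAt] : (A^T == kermx (kermx A)^T)%MS.
  by rewrite -(mxrank_leqif_eq At_ker).2 rank_eq.
have /submxP[xi ->] : (c <= A^T)%MS.
  by apply: submx_trans kerAt; apply/sub_kermxP.
by exists xi.
Qed.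

Lemma orth_projection (k m : nat) (B : 'M[F]_(k, m)) (y : 'rV[F]_m) :
  exists w : 'rV[F]_m, (w <= B)%MS /\ (y - w) *m B^T = 0.
Proof.
set S := row_base B; set G := S *m S^T.
have G_unit : G \in unitmx.
  rewrite -row_free_unit -kermx_eq0; apply/eqP.
  have kerG_S : kermx G *m S = 0.
    by apply: mulmx_tr_eq0; rewrite trmx_mul mulmxA -(mulmxA _ S) mulmx_ker mul0mx.
  by apply/eqP; rewrite -(mulmx_free_eq0 _ (row_base_free B)) kerG_S.
exists (y *m S^T *m invmx G *m S); split.
  by apply: submx_trans (submxMl _ _) _; rewrite eq_row_base.
have /submxP[D B_DS] : (B <= S)%MS by rewrite eq_row_base.
have -> : B^T = S^T *m D^T by rewrite -trmx_mul -B_DS.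
rewrite mulmxA mulmxBl -(mulmxA _ S) -/G -(mulmxA _ (invmx G)) mulVmx //.
by rewrite mulmx1 subrr mul0mx.
Qed.

End MatrixOrthogonality.

Lemma row_space_closed (k m : nat) (V : 'M[R]_(k, m)) (u : nat -> 'rV[R]_m) (l : 'rV[R]_m) :
  (forall t, (u t <= V)%MS) -> (forall j, Un_cv (fun t => u t ord0 j) (l ord0 j)) ->
  (l <= V)%MS.
Proof.
move=> uV cv_u; rewrite submxE; apply/eqP/matrixP => i r; rewrite (ord1 i) !mxE.
pose C := cokermx V.
have cv_sum : Un_cv (fun t => \big[Rplus/0]_(j < m) (u t ord0 j * C j r))
                    (\big[Rplus/0]_(j < m) (l ord0 j * C j r)).
  by apply: sumR_cv => j; apply: CV_mult; [exact: cv_u | exact: Un_cv_const].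
have u_coker : forall t, \big[Rplus/0]_(j < m) (u t ord0 j * C j r) = 0.
  move=> t; move: (uV t); rewrite submxE => /eqP/matrixP/(_ ord0 r).
  by rewrite !mxE.
apply: UL_sequence cv_sum _.
by apply: (Un_cv_ext (fun _ => 0)) (Un_cv_const 0) => t; rewrite u_coker.
Qed.

(** The objects of the statement as matrices: [n = ker pi] is the left kernel
    of the [d x n] matrix [Amat X] whose rows are the normals [X j]. *)
Delimit Scope ring_scope with ring.

Definition row_of {k : nat} (Y : vec k) : 'rV[R]_k := \row_j Y j.
Definition vec_of {k : nat} (u : 'rV[R]_k) : vec k := fun j => u ord0 j.
Definition Amat {n d : nat} (X : 'I_d -> vec n) : 'M[R]_(d, n) := \matrix_(j, i) X j i.
Definition mask_mx {d : nat} (I : pred 'I_d) : 'M[R]_d :=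
  diag_mx (\row_j (if I j then 0 else 1)).

Lemma vec_ofK (k : nat) (u : 'rV[R]_k) : row_of (vec_of u) = u.
Proof. by apply/matrixP => i j; rewrite (ord1 i) mxE. Qed.

Lemma dot_mx (k : nat) (u v : vec k) : dot u v = (row_of u *m (row_of v)^T)%ring ord0 ord0.
Proof. by rewrite /dot !mxE; apply: eq_bigr => j _; rewrite !mxE. Qed.

Lemma mask_mxE (d : nat) (I : pred 'I_d) (u : 'rV[R]_d) j :
  (u *m mask_mx I)%ring ord0 j = if I j then 0 else u ord0 j.
Proof. by rewrite mul_mx_diag !mxE; case: (I j); [exact: Rmult_0_r | exact: Rmult_1_r]. Qed.

Section KernelCoordinates.
Context {n d : nat} (X : 'I_d -> vec n).

Lemma dot_Amat (xi : 'rV[R]_n) j : dot (vec_of xi) (X j) = (xi *m (Amat X)^T)%ring ord0 j.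
Proof. by rewrite /dot !mxE; apply: eq_bigr => i _; rewrite !mxE. Qed.

Lemma pi_map_mx (Y : vec d) i : pi_map X Y i = (row_of Y *m Amat X)%ring ord0 i.
Proof. by rewrite /pi_map !mxE; apply: eq_bigr => j _; rewrite !mxE. Qed.

Lemma in_n_ker (Y : vec d) : in_n X Y <-> (row_of Y <= kermx (Amat X))%MS.
Proof.
rewrite sub_kermx; split => [Y_n | /eqP Y_ker i].
  by apply/eqP/matrixP => i j; rewrite (ord1 i) -pi_map_mx Y_n mxE.
by rewrite pi_map_mx Y_ker mxE.
Qed.

Lemma in_n_I_ker (I : pred 'I_d) (W : vec d) :
  in_n_I X I W <-> (row_of W <= kermx (Amat X) :&: kermx (mask_mx I))%MS.
Proof.
have maskE : (forall j, ~~ I j -> W j = 0) <-> (row_of W <= kermx (mask_mx I))%MS.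
  rewrite sub_kermx; split => [W_I | /eqP/matrixP W_ker j Ij].
    apply/eqP/matrixP => i j; rewrite (ord1 i) mask_mxE mxE.
    case: ifPn => [_ | Ij]; rewrite mxE //.
    exact: (W_I j Ij).
  by have := W_ker ord0 j; rewrite mask_mxE (negbTE Ij) !mxE.
rewrite sub_capmx; split => [[/in_n_ker -> /maskE ->] // | /andP[/in_n_ker Wn /maskE WI]].
by split.
Qed.

Lemma in_n_comb (Y W : vec d) (s t : R) :
  in_n X Y -> in_n X W -> in_n X (fun j => s * Y j + t * W j).
Proof.
move=> Y_n W_n i; rewrite /pi_map.
under eq_bigr => j _ do rewrite Rmult_plus_distr_r !Rmult_assoc.
by rewrite big_split -!big_distrr /= -!/(pi_map _ _ i) Y_n W_n; ring.
Qed.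

Lemma in_n_zero : in_n X (fun _ => 0).
Proof. by move=> i; rewrite /pi_map big1 // => j _; ring. Qed.

(* The projection of [n] to the coordinates outside [I] is closed; this is
   the compactness substitute used by the variational argument. *)
Lemma in_n_limit (I : pred 'I_d) (Ys : nat -> vec d) (l : vec d) :
  (forall k, in_n X (Ys k)) -> (forall j, ~~ I j -> Un_cv (fun k => Ys k j) (l j)) ->
  exists Y, in_n X Y /\ forall j, ~~ I j -> Y j = l j.
Proof.
move=> Ys_n cv_Ys.
pose K := kermx (Amat X); pose masked (Y : vec d) := (row_of Y *m mask_mx I)%ring.
have /submxP[D l_DK] : (masked l <= (K *m mask_mx I)%ring)%MS.
  apply: (@row_space_closed _ _ _ (fun k => masked (Ys k))) => [k | j].
    by apply: submxMr; apply/in_n_ker.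
  rewrite mask_mxE mxE; case: ifPn => Ij.
    by apply: (Un_cv_ext (fun _ => 0)) (Un_cv_const 0) => k; rewrite mask_mxE Ij.
  apply: (Un_cv_ext (fun k => Ys k j)) (cv_Ys j Ij) => k.
  by rewrite mask_mxE (negbTE Ij) mxE.
exists (vec_of (D *m K)%ring); split.
  by apply/in_n_ker; rewrite vec_ofK submxMl.
move=> j Ij; have := congr1 (fun u : 'rV_d => u ord0 j) l_DK.
by rewrite /= mulmxA !mask_mxE (negbTE Ij) mxE => ->.
Qed.

Lemma orth_n_range (v : vec d) :
  (forall W, in_n X W -> dot v W = 0) -> exists xi : vec n, forall j, v j = dot xi (X j).
Proof.
move=> v_orth.
have /orth_ker_range[xi v_xi] : (row_of v *m (kermx (Amat X))^T = 0)%ring.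
  apply/matrixP => i r; rewrite (ord1 i) [RHS]mxE.
  have row_n : in_n X (vec_of (row r (kermx (Amat X)))).
    by apply/in_n_ker; rewrite vec_ofK row_sub.
  apply: eq_trans (v_orth _ row_n); rewrite dot_mx vec_ofK !mxE.
  by apply: eq_bigr => j _; rewrite !mxE.
by exists (vec_of xi) => j; rewrite dot_Amat -v_xi mxE.
Qed.

Lemma in_r_projection (I : pred 'I_d) (Y : vec d) :
  in_n X Y -> exists Yr, in_r X I Yr /\ forall j, ~~ I j -> Yr j = Y j.
Proof.
move=> Y_n; pose B := (kermx (Amat X) :&: kermx (mask_mx I))%MS.
have [w [wB w_orth]] := @orth_projection _ _ _ B (row_of Y).
have w_nI : in_n_I X I (vec_of w) by apply/in_n_I_ker; rewrite vec_ofK.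
exists (vec_of (row_of Y - w)%ring); split; [split|].
- apply/in_n_ker; rewrite vec_ofK; apply: addmx_sub; first exact/in_n_ker.
  by rewrite eqmx_opp; exact: submx_trans wB (capmxSl _ _).
- move=> W /in_n_I_ker /submxP[D W_DB].
  by rewrite dot_mx vec_ofK W_DB trmx_mul mulmxA w_orth mul0mx mxE.
- move=> j Ij; rewrite /vec_of !mxE.
  by move: (w_nI.2 j Ij); rewrite /vec_of => ->; rewrite subr0.
Qed.

End KernelCoordinates.

(** The one-variable potential [h_{a,c}(t) = a e^{-4 pi t} / (4 pi) + c t];
    its derivative [c - a e^{-4 pi t}] is the [j]-th component of the moment
    map along the orbit, up to the constant [<mu0, X_j>]. *)
Definition potential (a c t : R) : R := a * exp (- (4 * PI * t)) / (4 * PI) + c * t.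

Lemma PI4_gt0 : 0 < 4 * PI.
Proof. by have := PI_RGT_0; lra. Qed.

Lemma potential_derive a c x :
  derivable_pt_lim (potential a c) x (c - a * exp (- (4 * PI * x))).
Proof.
have d_lin : derivable_pt_lim (fun t => - (4 * PI * t)) x (- (4 * PI)).
  apply: (derivable_pt_lim_ext (mult_real_fct (- (4 * PI)) id)).
    by move=> t; rewrite /mult_real_fct /id; ring.
  by rewrite -[X in derivable_pt_lim _ _ X]Rmult_1_r; apply: derivable_pt_lim_scal;
    exact: derivable_pt_lim_id.
have d_exp := derivable_pt_lim_comp _ exp x _ _ d_lin (derivable_pt_lim_exp _).
have d_ct : derivable_pt_lim (fun t => c * t) x c.
  apply: (derivable_pt_lim_ext (mult_real_fct c id)) => [t //|].
  by rewrite -[X in derivable_pt_lim _ _ X]Rmult_1_r; apply: derivable_pt_lim_scal;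
    exact: derivable_pt_lim_id.
have := derivable_pt_lim_plus _ _ x _ _ (derivable_pt_lim_scal _ (a / (4 * PI)) x _ d_exp) d_ct.
have -> : c - a * exp (- (4 * PI * x)) = a / (4 * PI) * (exp (- (4 * PI * x)) * - (4 * PI)) + c.
  by field; have := PI4_gt0; lra.
apply: derivable_pt_lim_ext => t.
by rewrite /potential /plus_fct /mult_real_fct /comp; field; have := PI4_gt0; lra.
Qed.

Lemma potential_continuous a c x : continuity_pt (potential a c) x.
Proof. by apply: derivable_continuous_pt; eexists; exact: potential_derive. Qed.

Lemma potential_derive_along a c p q :
  derivable_pt_lim (fun t => potential a c (p + t * q)) 0 ((c - a * exp (- (4 * PI * p))) * q).
Proof.
have d_line : derivable_pt_lim (fun t => p + t * q) 0 q.
  apply: (derivable_pt_lim_ext (fct_cte p + mult_real_fct q id)%F).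
    by move=> t; rewrite /plus_fct /fct_cte /mult_real_fct /id; ring.
  rewrite -[X in derivable_pt_lim _ _ X]Rplus_0_l -[X in _ + X]Rmult_1_r.
  apply: derivable_pt_lim_plus; first exact: derivable_pt_lim_const.
  by apply: derivable_pt_lim_scal; exact: derivable_pt_lim_id.
have := derivable_pt_lim_comp _ _ 0 _ _ d_line (potential_derive a c (p + 0 * q)).
by rewrite Rmult_0_l Rplus_0_r.
Qed.

Definition potential_min (a c : R) : R := - (c * c) / (4 * a * PI).

Lemma potential_min_le0 a c : 0 < a -> potential_min a c <= 0.
Proof.
move=> a_gt0; have PI_gt0 := PI_RGT_0; rewrite /potential_min /Rdiv.
have : 0 < / (4 * a * PI) by apply: Rinv_0_lt_compat; nra.
nra.
Qed.

(* [e^u >= (1 + u/2)^2 >= u^2/4] for [u >= 0] gives the quadratic bound used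
   for negative times; for nonnegative times both terms are nonnegative. *)
Lemma potential_ge_min a c t : 0 < a -> 0 <= c -> potential_min a c <= potential a c t.
Proof.
move=> a_gt0 c_ge0; have PI_gt0 := PI_RGT_0; have min_le0 := @potential_min_le0 a c a_gt0.
have exp_gt0 := exp_pos (- (4 * PI * t)).
rewrite /potential; case: (Rle_lt_dec 0 t) => [t_ge0 | t_lt0].
  have : 0 <= a * exp (- (4 * PI * t)) / (4 * PI).
    by apply: Rmult_le_pos; [nra | apply/Rlt_le/Rinv_0_lt_compat; lra].
  nra.
set u := - (4 * PI * t); have u_gt0 : 0 < u by rewrite /u; nra.
have exp_quad : 4 * (PI * PI * t * t) <= exp u.
  have e : exp u = exp (u / 2) * exp (u / 2) by rewrite -exp_plus; congr exp; field.
  have E_ge := exp_ineq1_le (u / 2).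
  have : u * u / 4 <= exp u by rewrite e; nra.
  by rewrite /u; nra.
have quad_le : a * PI * (t * t) <= a * exp u / (4 * PI).
  apply: (Rmult_le_reg_r (4 * PI)); first lra.
  have -> : a * exp u / (4 * PI) * (4 * PI) = a * exp u by field; lra.
  nra.
suff : potential_min a c <= a * PI * (t * t) + c * t by lra.
apply: (Rmult_le_reg_r (4 * a * PI)); first nra.
have -> : potential_min a c * (4 * a * PI) = - (c * c) by rewrite /potential_min; field; lra.
have : 0 <= (2 * a * PI * t + c) * (2 * a * PI * t + c) by apply: Rle_0_sqr.
nra.
Qed.

Lemma potential00 t : potential 0 0 t = 0.
Proof. by rewrite /potential; field; have := PI4_gt0; lra. Qed.

Lemma potential_midpoint a c s t :
  potential a c s + potential a c t - 2 * potential a c ((s + t) / 2) =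
  a / (4 * PI) * ((exp (- (2 * PI * s)) - exp (- (2 * PI * t))) ^ 2).
Proof.
rewrite /potential; set p := exp (- (2 * PI * s)); set q := exp (- (2 * PI * t)).
have e_s : exp (- (4 * PI * s)) = p * p by rewrite /p -exp_plus; congr exp; field.
have e_t : exp (- (4 * PI * t)) = q * q by rewrite /q -exp_plus; congr exp; field.
have e_m : exp (- (4 * PI * ((s + t) / 2))) = p * q by rewrite /p /q -exp_plus; congr exp; field.
by rewrite e_s e_t e_m; field; have := PI4_gt0; lra.
Qed.

Lemma potential_midpoint_convex a c s t : 0 <= a ->
  0 <= potential a c s + potential a c t - 2 * potential a c ((s + t) / 2).
Proof.
move=> a_ge0; rewrite potential_midpoint; apply: Rmult_le_pos; last exact: pow2_ge_0.
by apply: Rmult_le_pos => //; apply/Rlt_le/Rinv_0_lt_compat/PI4_gt0.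
Qed.

Lemma exp_le_mono x y : x <= y -> exp x <= exp y.
Proof. by case=> [/exp_increasing/Rlt_le | ->] //; exact: Rle_refl. Qed.

Lemma exp_decr_sign u v : (exp (- (4 * PI * u)) - exp (- (4 * PI * v))) * (u - v) <= 0.
Proof.
have PI_gt0 := PI_RGT_0.
case: (Rle_lt_dec u v) => uv.
  have : exp (- (4 * PI * v)) <= exp (- (4 * PI * u)) by apply: exp_le_mono; nra.
  nra.
have : exp (- (4 * PI * u)) <= exp (- (4 * PI * v)) by apply: exp_le_mono; nra.
nra.
Qed.

Lemma exp_decr_eq u v : (exp (- (4 * PI * u)) - exp (- (4 * PI * v))) * (u - v) = 0 -> u = v.
Proof.
have PI_gt0 := PI_RGT_0.
case/Rmult_integral => [e_uv | ?]; last lra.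
have /exp_inv : exp (- (4 * PI * u)) = exp (- (4 * PI * v)) by lra.
nra.
Qed.

Lemma exp_neg_lipschitz_below u v B : u <= B -> v <= B ->
  exp (- B) * Rabs (u - v) <= Rabs (exp (- u) - exp (- v)).
Proof.
wlog vu : u v / v <= u.
  move=> W uB vB; case: (Rle_lt_dec v u) => [vu | uv]; first exact: W.
  by rewrite Rabs_minus_sym (Rabs_minus_sym (exp (- u))); apply: W => //; lra.
move=> uB vB; have eu_le : exp (- u) <= exp (- v) by apply: exp_le_mono; lra.
rewrite (Rabs_right (u - v)); last lra.
rewrite Rabs_minus_sym (Rabs_right (exp (- v) - exp (- u))); last lra.
have -> : exp (- v) = exp (- u) * exp (u - v) by rewrite -exp_plus; congr exp; ring.
have eu_gt0 := exp_pos (- u).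
have step : exp (- u) * (u - v) <= exp (- u) * exp (u - v) - exp (- u).
  by have := exp_ineq1_le (u - v); nra.
have : exp (- B) * (u - v) <= exp (- u) * (u - v).
  by apply: Rmult_le_compat_r; [lra | apply: exp_le_mono; lra].
lra.
Qed.

Lemma potential_midpoint_strong a c s t B : 0 <= a -> s <= B -> t <= B ->
  a * PI * exp (- (4 * PI * B)) * ((s - t) * (s - t)) <=
  potential a c s + potential a c t - 2 * potential a c ((s + t) / 2).
Proof.
move=> a_ge0 sB tB; rewrite potential_midpoint; have PI_gt0 := PI_RGT_0.
have lip := exp_neg_lipschitz_below (2 * PI * s) (2 * PI * t) (2 * PI * B) ltac:(nra) ltac:(nra).
set D := exp (- (2 * PI * s)) - exp (- (2 * PI * t)) in lip *.
set E := exp (- (2 * PI * B)) in lip; have E_gt0 : 0 < E := exp_pos _.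
have -> : exp (- (4 * PI * B)) = E * E by rewrite /E -exp_plus; congr exp; ring.
have e : 2 * PI * s - 2 * PI * t = (2 * PI) * (s - t) by ring.
rewrite e Rabs_mult (Rabs_right (2 * PI)) in lip; last lra.
have sq_le : (E * (2 * PI * Rabs (s - t))) ^ 2 <= D ^ 2.
  rewrite -(pow2_abs D); apply: pow_incr; split => //.
  by apply: Rmult_le_pos; [lra | have := Rabs_pos (s - t); nra].
have -> : (s - t) * (s - t) = Rabs (s - t) ^ 2 by rewrite pow2_abs; ring.
have a4_ge0 : 0 <= a / (4 * PI).
  by apply: Rmult_le_pos => //; apply/Rlt_le/Rinv_0_lt_compat/PI4_gt0.
apply: Rle_trans (Rmult_le_compat_l _ _ _ a4_ge0 sq_le).
by right; field; lra.
Qed.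

Lemma inv_succ_small (e : R) : 0 < e ->
  exists K : nat, forall p : nat, (p >= K)%coq_nat -> / (INR p + 1) < e.
Proof.
move=> e_gt0; have [K K_gt] := INR_unbounded (/ e).
exists K => p pK; have := le_INR _ _ pK; have := pos_INR p => ? ?.
rewrite -(Rinv_inv e); apply: Rinv_lt_contravar; last lra.
by apply: Rmult_lt_0_compat; [apply: Rinv_0_lt_compat | ]; lra.
Qed.

Lemma inv_succ_le1 (k : nat) : / (INR k + 1) <= 1.
Proof. by rewrite -Rinv_1; apply: Rinv_le_contravar; have := pos_INR k; lra. Qed.

Lemma minimizing_sequence (T : Type) (N : T -> Prop) (g : T -> R) (L : R) (x0 : T) :
  N x0 -> (forall x, N x -> L <= g x) ->
  exists (m : R) (xs : nat -> T), (forall x, N x -> m <= g x) /\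
    forall k, N (xs k) /\ g (xs k) < m + / (INR k + 1).
Proof.
move=> Nx0 g_ge.
pose E r := exists x, N x /\ r = - g x.
have [M [M_ub M_lub]] : {M | is_lub E M}.
  apply: completeness; last by exists (- g x0), x0.
  by exists (- L) => r [x [Nx ->]]; have := g_ge x Nx; lra.
exists (- M).
have approx k : exists x, N x /\ g x < - M + / (INR k + 1).
  have inv_gt0 : 0 < / (INR k + 1) by apply: Rinv_0_lt_compat; have := pos_INR k; lra.
  apply: NNPP => no_x; suff : M <= M - / (INR k + 1) by lra.
  apply: M_lub => r [x [Nx ->]].
  case: (Rlt_le_dec (g x) (- M + / (INR k + 1))) => gx; last lra.
  by exfalso; apply: no_x; exists x.
have [xs xs_spec] := choice _ approx.
exists xs; split => // x Nx.
by have := M_ub (- g x) (ex_intro _ x (conj Nx erefl)); lra.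
Qed.

(** Each coordinate is either inert
    ([a_j = c_j = 0]) or coercive and strongly convex on half-lines
    ([a_j, c_j > 0]); [N] only needs to be closed in the coercive coordinates. *)
Section Variational.
Context {d : nat} (a c : vec d) (N : vec d -> Prop).
Hypothesis ac_cases : forall j, (a j = 0 /\ c j = 0) \/ (0 < a j /\ 0 < c j).
Hypothesis N0 : N (fun _ => 0).
Hypothesis N_comb : forall Y W s t, N Y -> N W -> N (fun j => s * Y j + t * W j).
Hypothesis N_closed : forall (Ys : nat -> vec d) (l : vec d), (forall k, N (Ys k)) ->
  (forall j, 0 < a j -> Un_cv (fun k => Ys k j) (l j)) ->
  exists Y, N Y /\ forall j, 0 < a j -> Y j = l j.

Definition energy (Y : vec d) : R := \big[Rplus/0]_(j < d) potential (a j) (c j) (Y j).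
Definition energy_floor : R := \big[Rplus/0]_(j < d) potential_min (a j) (c j).

Lemma coord_floor j t :
  potential_min (a j) (c j) <= potential (a j) (c j) t /\ potential_min (a j) (c j) <= 0.
Proof.
case: (ac_cases j) => [[-> ->] | [a_gt0 c_gt0]].
  by rewrite potential00 /potential_min Rmult_0_l Ropp_0 /Rdiv Rmult_0_l; lra.
by split; [apply: potential_ge_min; lra | exact: potential_min_le0].
Qed.

Lemma energy_ge_floor Y : energy_floor <= energy Y.
Proof. by apply: sumR_le => j; exact: (coord_floor j (Y j)).1. Qed.

Lemma energy_coercive Y j : 0 < a j -> c j * Y j <= energy Y - energy_floor.
Proof.
move=> a_gt0; rewrite /energy /energy_floor -sumR_sub.
have gap_ge0 i : 0 <= potential (a i) (c i) (Y i) - potential_min (a i) (c i).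
  by have := (coord_floor i (Y i)).1; lra.
apply: Rle_trans _ (sumR_term j gap_ge0); have := (coord_floor j (Y j)).2.
have : 0 <= a j * exp (- (4 * PI * Y j)) / (4 * PI).
  apply: Rmult_le_pos; first by have := exp_pos (- (4 * PI * Y j)); nra.
  exact/Rlt_le/Rinv_0_lt_compat/PI4_gt0.
rewrite /potential; lra.
Qed.

Lemma energy_midpoint Y W j :
  potential (a j) (c j) (Y j) + potential (a j) (c j) (W j)
    - 2 * potential (a j) (c j) ((Y j + W j) / 2) <=
  energy Y + energy W - 2 * energy (fun i => / 2 * Y i + / 2 * W i).
Proof.
have -> : energy Y + energy W - 2 * energy (fun i => / 2 * Y i + / 2 * W i) =
  \big[Rplus/0]_(i < d) (potential (a i) (c i) (Y i) + potential (a i) (c i) (W i)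
                         - 2 * potential (a i) (c i) ((Y i + W i) / 2)).
  rewrite sumR_sub big_split big_distrr /=; congr (_ - _); apply: eq_bigr => i _.
  by congr (2 * potential _ _ _); field.
apply: (sumR_term j) => i; apply: potential_midpoint_convex.
by case: (ac_cases i) => [[-> _] | [? _]]; lra.
Qed.

Section MinimizingSequence.
Variables (m : R) (Ys : nat -> vec d).
Hypothesis m_le : forall Y, N Y -> m <= energy Y.
Hypothesis Ys_N : forall k, N (Ys k).
Hypothesis Ys_min : forall k, energy (Ys k) < m + / (INR k + 1).

(* A minimizing sequence stays in a half-line in each coercive coordinate. *)
Definition coord_bound j : R := (m + 1 - energy_floor) / c j.

Lemma minimizing_bounded j k : 0 < a j -> Ys k j <= coord_bound j.
Proof.
move=> a_gt0; have c_gt0 : 0 < c j by case: (ac_cases j) => [[]|[]] //; lra.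
apply: (Rmult_le_reg_l (c j)) => //.
have -> : c j * coord_bound j = m + 1 - energy_floor by rewrite /coord_bound; field; lra.
by have := energy_coercive (Ys k) j a_gt0; have := Ys_min k; have := inv_succ_le1 k; lra.
Qed.

(* Strong convexity turns almost-minimality into closeness. *)
Lemma minimizing_spread j p q : 0 < a j ->
  a j * PI * exp (- (4 * PI * coord_bound j)) * ((Ys p j - Ys q j) * (Ys p j - Ys q j)) <=
  / (INR p + 1) + / (INR q + 1).
Proof.
move=> a_gt0.
have mid_N := N_comb _ _ (/ 2) (/ 2) (Ys_N p) (Ys_N q).
have := m_le _ mid_N; have := Ys_min p; have := Ys_min q.
have := energy_midpoint (Ys p) (Ys q) j.
have := potential_midpoint_strong (a j) (c j) (Ys p j) (Ys q j) (coord_bound j)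
  (Rlt_le _ _ a_gt0) (minimizing_bounded j p a_gt0) (minimizing_bounded j q a_gt0).
lra.
Qed.

Lemma minimizing_cauchy j : 0 < a j -> Cauchy_crit (fun k => Ys k j).
Proof.
move=> a_gt0 eps eps_gt0.
set kap := a j * PI * exp (- (4 * PI * coord_bound j)).
have kap_gt0 : 0 < kap.
  apply: Rmult_lt_0_compat; last exact: exp_pos.
  by apply: Rmult_lt_0_compat => //; exact: PI_RGT_0.
have tol_gt0 : 0 < kap * (eps * eps) / 2 by have := Rmult_lt_0_compat _ _ eps_gt0 eps_gt0; nra.
have [K K_small] := inv_succ_small _ tol_gt0.
exists K => p q pK qK; rewrite /R_dist.
have spread := minimizing_spread j p q a_gt0; rewrite -/kap in spread.
have := K_small p pK; have := K_small q qK => ? ?.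
have sq_lt : Rabs (Ys p j - Ys q j) ^ 2 < eps ^ 2.
  rewrite pow2_abs; apply: (Rmult_lt_reg_l kap) => //; simpl; lra.
have := Rabs_pos (Ys p j - Ys q j); nra.
Qed.

Lemma minimizing_limit : exists Y, N Y /\ energy Y = m.
Proof.
have lim_j j : exists l, 0 < a j -> Un_cv (fun k => Ys k j) l.
  case: (Rlt_dec 0 (a j)) => [a_gt0 | a_ngt0]; last by exists 0 => /a_ngt0.
  by have [l cv_l] := R_complete _ (minimizing_cauchy j a_gt0); exists l.
have [l cv_l] := choice _ lim_j.
have [Y [NY Y_l]] := N_closed Ys l Ys_N cv_l.
exists Y; split => //.
have cv_energy : Un_cv (fun k => energy (Ys k)) (energy Y).
  apply: sumR_cv => j; case: (ac_cases j) => [[-> ->] | [a_gt0 _]].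
    rewrite potential00; apply: (Un_cv_ext (fun _ => 0)) (Un_cv_const 0) => k.
    by rewrite potential00.
  by rewrite (Y_l j a_gt0); apply: continuity_seq (potential_continuous _ _ _) (cv_l j a_gt0).
apply: UL_sequence cv_energy _ => eps eps_gt0.
have [K K_small] := inv_succ_small _ eps_gt0.
exists K => k kK; have := K_small k kK; have := Ys_min k; have := m_le _ (Ys_N k).
by rewrite /R_dist => ? ? ?; rewrite Rabs_right; lra.
Qed.

End MinimizingSequence.

Lemma energy_minimizer : exists Y, N Y /\ forall W, N W -> energy Y <= energy W.
Proof.
have [m [Ys [m_le Ys_spec]]] :=
  minimizing_sequence _ N energy energy_floor _ N0 (fun Y _ => energy_ge_floor Y).
have [Y [NY EY]] :=
  minimizing_limit m Ys m_le (fun k => (Ys_spec k).1) (fun k => (Ys_spec k).2).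
by exists Y; split => // W NW; rewrite EY; apply: m_le.
Qed.

Lemma energy_critical Y : N Y -> (forall W, N W -> energy Y <= energy W) ->
  forall W, N W -> \big[Rplus/0]_(j < d) ((c j - a j * exp (- (4 * PI * Y j))) * W j) = 0.
Proof.
move=> NY Y_min W NW.
pose f t := energy (fun j => Y j + t * W j).
have df : derivable_pt_lim f 0
    (\big[Rplus/0]_(j < d) ((c j - a j * exp (- (4 * PI * Y j))) * W j)).
  by apply: sumR_derive => j; exact: potential_derive_along.
apply: (deriv_minimum f (-1) 1 0 (exist _ _ df)); try lra.
move=> t _ _; have -> : f 0 = energy Y.
  by apply: eq_bigr => j _; rewrite Rmult_0_l Rplus_0_r.
have -> : f t = energy (fun j => 1 * Y j + t * W j).
  by apply: eq_bigr => j _; rewrite Rmult_1_l.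
exact/Y_min/N_comb.
Qed.

End Variational.

Lemma cnormsq_ge0 (w : cplx) : 0 <= cnormsq w.
Proof. by rewrite /cnormsq; have := Rle_0_sqr w.1; have := Rle_0_sqr w.2; rewrite /Rsqr; lra. Qed.

Lemma cnormsq_gt0 (w : cplx) : w <> czero -> 0 < cnormsq w.
Proof.
case: w => p q w_neq0; rewrite /cnormsq /=.
case: (Req_dec p 0) => [p0 | ?]; last by have := Rle_0_sqr q; rewrite /Rsqr; nra.
case: (Req_dec q 0) => [q0 | ?]; last by rewrite p0; nra.
by exfalso; apply: w_neq0; rewrite p0 q0.
Qed.

Lemma cnormsq_eq0 (w : cplx) : cnormsq w = 0 <-> w = czero.
Proof.
split => [w0 | ->]; last by rewrite /cnormsq /czero /=; ring.
by apply: NNPP => /cnormsq_gt0; lra.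
Qed.

Lemma cnormsq_scale (r : R) (w : cplx) : cnormsq (cscale r w) = r * r * cnormsq w.
Proof. by rewrite /cnormsq /cscale /=; ring. Qed.

Lemma cscale_czero (r : R) : cscale r czero = czero.
Proof. by rewrite /cscale /czero /= Rmult_0_r. Qed.

Lemma cscale_inj (r s : R) (w : cplx) : w <> czero -> cscale r w = cscale s w -> r = s.
Proof.
case: w => p q w_neq0 [rs_p rs_q].
case: (Req_dec p 0) => [p0 | ?]; last exact: (Rmult_eq_reg_r p).
case: (Req_dec q 0) => [q0 | ?]; last exact: (Rmult_eq_reg_r q).
by exfalso; apply: w_neq0; rewrite p0 q0.
Qed.

Lemma cnormsq_act (d : nat) (Y : vec d) (z : 'I_d -> cplx) j :
  cnormsq (act Y z j) = exp (- (4 * PI * Y j)) * cnormsq (z j).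
Proof.
rewrite /act cnormsq_scale -exp_plus; congr (exp _ * _); ring.
Qed.

Lemma act_czero (d : nat) (Y : vec d) (z : 'I_d -> cplx) j : act Y z j = czero <-> z j = czero.
Proof.
rewrite -!cnormsq_eq0 cnormsq_act; have := exp_pos (- (4 * PI * Y j)).
by split => [/Rmult_integral[|] | ->]; lra.
Qed.

Lemma act_agree (d : nat) (I : pred 'I_d) (z : 'I_d -> cplx) (Y Y' : vec d) :
  in_CstarFc I z -> act Y z = act Y' z <-> forall j, ~~ I j -> Y j = Y' j.
Proof.
move=> z_F; have PI_gt0 := PI_RGT_0; split => [YY' j Ij | YY'].
  have := cscale_inj _ _ _ ((z_F j).2 Ij) (congr1 (fun x => x j) YY').
  by move/exp_inv; nra.
apply: functional_extensionality => j; rewrite /act.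
by case: (boolP (I j)) => [/(z_F j).1 -> | /YY' ->]; rewrite ?cscale_czero.
Qed.

Lemma in_CstarFc_czero (d : nat) (I : pred 'I_d) (z : 'I_d -> cplx) :
  in_CstarFc I z -> forall j, z j = czero <-> I j.
Proof.
move=> z_F j; split => [zj0 | /(z_F j).1 //].
by apply: contraT => /(z_F j).2.
Qed.

Lemma dot_comb (k : nat) (u v w : vec k) (t : R) :
  dot (fun i => u i + t * v i) w = dot u w + t * dot v w.
Proof.
by rewrite /dot big_distrr -big_split /=; apply: eq_bigr => i _; ring.
Qed.

Section Toric.
Context {n d : nat} {X : 'I_d -> vec n} {lam : vec d}.

(* Linear functionals [Y |-> <mu, pi Y>] vanish on [n]. *)
Lemma sum_dot_n (mu : vec n) (W : vec d) : in_n X W ->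
  \big[Rplus/0]_(j < d) (dot mu (X j) * W j) = 0.
Proof.
move=> W_n; rewrite /dot.
under eq_bigr => j _ do rewrite big_distrl /=.
rewrite exchange_big /= big1 // => i _.
transitivity (mu i * pi_map X W i); last by rewrite W_n; ring.
by rewrite /pi_map big_distrr; apply: eq_bigr => j _ /=; ring.
Qed.

Lemma Psi_actE (Y : vec d) (z : 'I_d -> cplx) (W : vec d) :
  Psi lam (act Y z) W =
  \big[Rplus/0]_(j < d) ((cnormsq (z j) * exp (- (4 * PI * Y j)) + lam j) * W j).
Proof. by apply: eq_bigr => j _; rewrite cnormsq_act; ring. Qed.

(* Measured from a point [mu], the moment map along the orbit is minus the
   derivative of the energy with [a_j = |z_j|^2] and [c_j = <mu, X_j> - lam_j]. *)
Lemma Psi_act_slack (mu : vec n) (Y : vec d) (z : 'I_d -> cplx) (W : vec d) : in_n X W ->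
  Psi lam (act Y z) W = - \big[Rplus/0]_(j < d)
    ((dot mu (X j) - lam j - cnormsq (z j) * exp (- (4 * PI * Y j))) * W j).
Proof.
move=> W_n; rewrite Psi_actE.
set S := \big[Rplus/0]_(j < d) ((_ + lam j) * W j).
suff -> : \big[Rplus/0]_(j < d)
    ((dot mu (X j) - lam j - cnormsq (z j) * exp (- (4 * PI * Y j))) * W j) =
    \big[Rplus/0]_(j < d) (dot mu (X j) * W j) - S by rewrite sum_dot_n //; ring.
by rewrite /S -sumR_sub; apply: eq_bigr => j _; ring.
Qed.

(* On an [A]-orbit the moment map vanishes at most once: the difference of
   the moment map at two points, paired with the difference of their
   parameters, is a sum of nonpositive terms by monotonicity of [exp]. *)
Lemma Psi_zero_orbit_unique (z : 'I_d -> cplx) (Y Y' : vec d) :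
  in_n X Y -> in_n X Y' -> Psi_zero X lam (act Y z) -> Psi_zero X lam (act Y' z) ->
  act Y z = act Y' z.
Proof.
move=> Y_n Y'_n PY PY'.
have V_n := in_n_comb X _ _ 1 (-1) Y'_n Y_n.
pose F j := - (cnormsq (z j) *
  ((exp (- (4 * PI * Y' j)) - exp (- (4 * PI * Y j))) * (Y' j - Y j))).
have F_ge0 j : 0 <= F j.
  by have := cnormsq_ge0 (z j); have := exp_decr_sign (Y' j) (Y j); rewrite /F; nra.
have F_sum0 : \big[Rplus/0]_(j < d) F j = 0.
  have := PY _ V_n; have := PY' _ V_n; rewrite !Psi_actE => P'0 P0.
  rewrite -[RHS]Ropp_0 -[X in - X](Rminus_diag_eq _ _ (eq_trans P'0 (esym P0))).
  rewrite -sumR_sub (big_morph Ropp Ropp_plus_distr Ropp_0).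
  by apply: eq_bigr => j _; rewrite /F; ring.
apply: functional_extensionality => j; rewrite /act.
case: (classic (z j = czero)) => [-> | /cnormsq_gt0 z_gt0]; first by rewrite !cscale_czero.
have := sumR_eq0 F_ge0 F_sum0 j; rewrite /F => F0.
have /exp_decr_eq -> // : (exp (- (4 * PI * Y' j)) - exp (- (4 * PI * Y j))) * (Y' j - Y j) = 0.
by apply: (Rmult_eq_reg_l (cnormsq (z j))); lra.
Qed.

Lemma face_point_exists (x : 'I_d -> cplx) : Psi_zero X lam x ->
  exists xi : vec n, forall j, dot xi (X j) - lam j = cnormsq (x j).
Proof.
move=> Px; have [|xi xi_spec] := orth_n_range X (fun j => cnormsq (x j) + lam j).
  by move=> W W_n; rewrite -(Px W W_n) /dot /Psi; apply: eq_bigr.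
by exists xi => j; rewrite -xi_spec; ring.
Qed.

Lemma face_point_in_face (I : pred 'I_d) (x : 'I_d -> cplx) (xi : vec n) :
  (forall j, dot xi (X j) - lam j = cnormsq (x j)) -> (forall j, x j = czero <-> I j) ->
  in_face X lam I xi.
Proof.
move=> xi_x x_I; split => j.
  by have := cnormsq_ge0 (x j); rewrite -xi_x; lra.
rewrite -x_I -cnormsq_eq0 -xi_x; lra.
Qed.

(* Bounded polytopes have no recession direction, so the normals span. *)
Lemma face_point_unique (xi xi' : vec n) : delta_bounded X lam -> inDelta X lam xi ->
  (forall j, dot xi' (X j) = dot xi (X j)) -> xi' = xi.
Proof.
move=> [B B_bd] xi_D xi_xi'; apply: functional_extensionality => i.
pose eta k := xi' k + (-1) * xi k.
have eta_X j : dot eta (X j) = 0 by rewrite dot_comb xi_xi'; ring.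
apply: NNPP => neq; have eta_i : eta i <> 0 by rewrite /eta; lra.
pose t := (B + 1 + Rabs (xi i)) / eta i.
have shift_D : inDelta X lam (fun k => xi k + t * eta k).
  by move=> j; rewrite dot_comb eta_X Rmult_0_r Rplus_0_r; exact: xi_D.
have := B_bd _ shift_D i; have := B_bd _ xi_D i.
have -> : xi i + t * eta i = xi i + (B + 1 + Rabs (xi i)) by rewrite /t; field.
have := Rle_abs (- xi i); rewrite Rabs_Ropp => ? ?.
by rewrite Rabs_right; [lra | have := Rabs_pos (xi i); lra].
Qed.

Lemma in_r_unique (I : pred 'I_d) (Y Y' : vec d) : in_r X I Y -> in_r X I Y' ->
  (forall j, ~~ I j -> Y j = Y' j) -> Y = Y'.
Proof.
move=> [Y_n Y_r] [Y'_n Y'_r] YY'.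
pose D j := 1 * Y j + (-1) * Y' j.
have D_nI : in_n_I X I D.
  by split; [exact: in_n_comb | move=> j Ij; rewrite /D YY' //; ring].
have DD0 : dot D D = 0.
  have -> : dot D D = dot Y D - dot Y' D.
    by rewrite /dot -sumR_sub; apply: eq_bigr => j _; rewrite /D; ring.
  by rewrite Y_r // Y'_r //; ring.
apply: functional_extensionality => j.
have := sumR_eq0 (fun i => Rle_0_sqr (D i)) DD0 j.
by case/Rmult_integral; rewrite /D; lra.
Qed.

(* Existence: a minimizer of the energy on [n], built from [a_j = |z_j|^2] and
   the slacks [c_j = <mu, X_j> - lam_j] of a point [mu] of the face, gives a
   zero of the moment map on the orbit of [z]. *)
Lemma Psi_zero_in_orbit (I : pred 'I_d) (mu : vec n) (z : 'I_d -> cplx) :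
  in_face X lam I mu -> in_CstarFc I z -> exists Y, in_n X Y /\ Psi_zero X lam (act Y z).
Proof.
move=> [mu_D mu_I] z_F.
pose a j := cnormsq (z j); pose c j := dot mu (X j) - lam j.
have a_gt0 j : 0 < a j <-> ~~ I j.
  split => [a_pos | /(z_F j).2 /cnormsq_gt0 //].
  by apply/negP => /(z_F j).1 /cnormsq_eq0 a0; rewrite /a a0 in a_pos; lra.
have ac_cases j : (a j = 0 /\ c j = 0) \/ (0 < a j /\ 0 < c j).
  case: (boolP (I j)) => [Ij | nIj]; [left | right].
    by rewrite /a /c ((z_F j).1 Ij) (proj2 (mu_I j) Ij); split; [apply/cnormsq_eq0 | ring].
  split; first exact/a_gt0.
  have := mu_D j; rewrite /c => /Rge_le/Rle_lt_or_eq_dec[|e]; first lra.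
  by move/negP: nIj; case; apply/(mu_I j).
have N_closed (Ys : nat -> vec d) (l : vec d) : (forall k, in_n X (Ys k)) ->
    (forall j, 0 < a j -> Un_cv (fun k => Ys k j) (l j)) ->
    exists Y, in_n X Y /\ forall j, 0 < a j -> Y j = l j.
  move=> Ys_n cv_Ys; have [|Y [Y_n Y_l]] := in_n_limit X I Ys l Ys_n.
    by move=> j /a_gt0; exact: cv_Ys.
  by exists Y; split => // j /a_gt0; exact: Y_l.
have [Y [Y_n Y_min]] := energy_minimizer a c _ ac_cases (in_n_zero X) (in_n_comb X) N_closed.
exists Y; split => // W W_n.
by rewrite (Psi_act_slack mu) // (energy_critical a c _ (in_n_comb X) _ Y_n Y_min _ W_n) Ropp_0.
Qed.

End Toric.

Theorem mainTheorem11 (n d : nat) (X : 'I_d -> vec n) (lam : vec d)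
  (Hfull : full_dim X lam) (Hbdd : delta_bounded X lam) (Hfacets : facets_distinct X lam)
  (I : pred 'I_d) (HF : is_face X lam I)
  (z : 'I_d -> cplx) (Hz : in_CstarFc I z) :
  exists (x : 'I_d -> cplx) (xi : vec n) (Y : vec d),
    (Psi_zero X lam x /\ in_face X lam I xi /\ in_r X I Y /\
     (forall w, (in_orbit X z w /\ Psi_zero X lam w) <-> w = x) /\
     act Y z = x /\
     (forall j, dot xi (X j) - lam j = cnormsq (x j))) /\
    (forall (x' : 'I_d -> cplx) (xi' : vec n) (Y' : vec d),
      Psi_zero X lam x' /\ in_face X lam I xi' /\ in_r X I Y' /\
      (forall w, (in_orbit X z w /\ Psi_zero X lam w) <-> w = x') /\
      act Y' z = x' /\
      (forall j, dot xi' (X j) - lam j = cnormsq (x' j)) ->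
      x' = x /\ xi' = xi /\ Y' = Y).
Proof.
have [mu mu_F] := HF.
have [Yc [Yc_n Psi_x]] := Psi_zero_in_orbit _ _ _ mu_F Hz.
set x := act Yc z.
have orbit_x w : (in_orbit X z w /\ Psi_zero X lam w) <-> w = x.
  split => [[[Y [Y_n <-]] Psi_w] | ->]; last by split => //; exists Yc.
  exact: Psi_zero_orbit_unique _ _ _ Y_n Yc_n Psi_w Psi_x.
have [xi xi_x] := face_point_exists _ Psi_x.
have xi_F : in_face X lam I xi.
  by apply: (face_point_in_face I x xi xi_x) => j; rewrite act_czero; exact: in_CstarFc_czero.
have [Yr [Yr_r Yr_Yc]] := in_r_projection X I _ Yc_n.
have Yr_x : act Yr z = x by apply/(act_agree _ _ _ _ _ Hz).
exists x, xi, Yr; split; first by do ![split => //].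
move=> x' xi' Y' [_ [_ [Y'_r [orbit_x' [Y'_x' xi'_x']]]]].
have x'_x : x' = x by symmetry; apply/orbit_x'/orbit_x.
split=> //; split.
  apply: face_point_unique Hbdd xi_F.1 _ => j.
  by have := xi'_x' j; rewrite x'_x -xi_x; lra.
by apply: (in_r_unique I) Y'_r Yr_r _; apply/(act_agree _ _ _ _ _ Hz); rewrite Y'_x' x'_x.
Qed.
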